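(* Let $q\geq 1$, and assume that the following convergence-of-means condition holds: with $$\mu_N=\frac1N\sum_{i=1}^N\lambda_i,\qquad \nu_N=\frac{\sum_{i=1}^N\lambda_i^2}{\sum_{i=1}^N\lambda_i},$$ there exist constants $\mu\in(0,\infty)$, $\nu\in(1,\infty)$ and $\alpha_1>0$ such that $|\mu_N-\mu|=O(N^{-\alpha_1})$ and $|\nu_N-\nu|=O(N^{-\alpha_1})$. Then $$\limsup_{N\to\infty}\sum_{n=0}^{\infty} n^q g^{(N)}_n<\infty \quad\text{if and only if}\quad \limsup_{N\to\infty}\frac1N\sum_{i=1}^N\lambda_i^{q+1}<\infty.$$
   Context: For each $N$, $\{\lambda_i\}_{i=1}^N$ is a sequence of positive reals (the capacities of the nodes $1,\dots,N$ of a random graph on $N$ nodes). Define the probability mass function $$g^{(N)}_n=\frac{1}{N\mu_N}\sum_{i=1}^N e^{-\lambda_i}\frac{\lambda_i^{n+1}}{n!},\qquad n\geq 0,$$ where $\mu_N=\frac1N\sum_{i=1}^N\lambda_i$. *)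

From HB Require Import structures.
From mathcomp Require Import all_boot all_order all_algebra.
From mathcomp Require Import all_classical all_reals all_analysis.
Set Implicit Arguments. Unset Strict Implicit. Unset Printing Implicit Defensive.
Import Order.TTheory GRing.Theory Num.Theory.
Local Open Scope ring_scope.

(* Capacities: lam N i is lambda_{i+1} for the graph on N nodes, i : 'I_N
   (so nodes 1..N correspond to indices 0..N-1). *)

Section Defs.
Variable R : realType.

Definition muN (lam : nat -> nat -> R) (N : nat) : R :=
  (\sum_(i < N) lam N i) / N%:R.

Definition nuN (lam : nat -> nat -> R) (N : nat) : R :=
  (\sum_(i < N) lam N i ^+ 2) / (\sum_(i < N) lam N i).

Definition gN (lam : nat -> nat -> R) (N n : nat) : R :=
  (N%:R * muN lam N)^-1 *
  \sum_(i < N) (expR (- lam N i) * lam N i ^+ n.+1 / (n`!)%:R).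

(* sum_{n>=0} n^q g^(N)_n, as an extended real (terms are nonnegative) *)
Definition moment_g (lam : nat -> nat -> R) (q : R) (N : nat) : \bar R :=
  (\sum_(0 <= n <oo) ((n%:R `^ q) * gN lam N n)%:E)%E.

Definition moment_lam (lam : nat -> nat -> R) (q : R) (N : nat) : R :=
  (\sum_(i < N) (lam N i `^ (q + 1))) / N%:R.

Definition bigO_rate (x : nat -> R) (l a : R) : Prop :=
  exists C : R, exists N0 : nat, forall N : nat, (N0 <= N)%N ->
    `|x N - l| <= C * (N%:R `^ (- a)).

End Defs.

From HB Require Import structures.
From mathcomp Require Import all_boot all_order all_algebra.
From mathcomp Require Import all_classical all_reals all_analysis.
From mathcomp Require Import ring lra.
Import Order.TTheory GRing.Theory Num.Theory numFieldNormedType.Exports.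
Local Open Scope classical_set_scope.
Local Open Scope ring_scope.

(* Let X_l be a Poisson variable of mean l.  The contribution of node i to
   g^(N)_n is l P(X_l = n) with l = lambda_i, so the q-th moment of g^(N) is
   (N mu_N)^-1 sum_i l_i E[X_(l_i)^q].  Averaging the tangent line
   n^q >= l^q + q l^(q-1) (n - l) of the convex map n |-> n^q gives
   l E[X_l^q] >= l^(q+1); the bound n^q <= (q (l+1))^q e^(n/(l+1)) together with
   E[c^X_l] = e^(l (c-1)) gives l E[X_l^q] <= K_q (l^(q+1) + l).  Hence the
   moment of g^(N) lies between m_N / mu_N and K_q (m_N / mu_N + 1), where
   m_N = N^-1 sum_i lambda_i^(q+1), and since mu_N -> mu > 0 both sequences are
   eventually bounded together. *)

Section poisson_moment.
Context {R : realType}.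
Implicit Types (q l x : R) (n : nat).

Lemma eseries_exp_coeff x :
  (\sum_(0 <= n <oo) (exp_coeff x n)%:E = (expR x)%:E)%E.
Proof.
rewrite /expR -EFin_lim; last exact: is_cvg_series_exp_coeff.
by apply: congr_lim; apply/funext => n /=; rewrite /series /= sumEFin.
Qed.

Definition poisson_term l n : R := expR (- l) * l ^+ n.+1 / n`!%:R.

Definition poisson_moment q l : \bar R :=
  (\sum_(0 <= n <oo) (n%:R `^ q * poisson_term l n)%:E)%E.

Lemma poisson_termE l n : poisson_term l n = expR (- l) * l * exp_coeff l n.
Proof. by rewrite /poisson_term /exp_coeff /= exprS !mulrA. Qed.

Lemma poisson_term_ge0 l n : 0 <= l -> 0 <= poisson_term l n.
Proof.
by move=> l0; rewrite poisson_termE mulr_ge0 ?exp_coeff_ge0 // mulr_ge0 ?expR_ge0.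
Qed.

Lemma poisson_term_shift l n :
  n.+1%:R * poisson_term l n.+1 = l * poisson_term l n.
Proof.
rewrite /poisson_term factS natrM exprS invfM.
by field; rewrite addrC natr1 !pnatr_eq0 -lt0n fact_gt0.
Qed.

Lemma eseries_poisson_term_exprn l (c : R) : 0 <= l -> 0 <= c ->
  (\sum_(0 <= n <oo) (poisson_term l n * c ^+ n)%:E =
    (l * expR (l * (c - 1)))%:E)%E.
Proof.
move=> l0 c0.
have termE n : poisson_term l n * c ^+ n = expR (- l) * l * exp_coeff (l * c) n.
  by rewrite poisson_termE /exp_coeff /= exprMn; ring.
under eq_eseriesr do rewrite termE EFinM.
rewrite nneseriesZl => [|n _]; last by rewrite lee_fin exp_coeff_ge0 ?mulr_ge0.
rewrite eseries_exp_coeff -EFinM mulrBr mulr1 addrC expRD; congr EFin; ring.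
Qed.

Lemma eseries_poisson_term l : 0 <= l ->
  (\sum_(0 <= n <oo) (poisson_term l n)%:E = l%:E)%E.
Proof.
move=> l0; have := @eseries_poisson_term_exprn l 1 l0 ler01.
by rewrite subrr mulr0 expR0 mulr1; under eq_eseriesr do rewrite expr1n mulr1.
Qed.

Lemma eseries_natr_poisson_term l : 0 <= l ->
  (\sum_(0 <= n <oo) (n%:R * poisson_term l n)%:E = (l ^+ 2)%:E)%E.
Proof.
move=> l0; have ge0 n : (0 <= (n%:R * poisson_term l n)%:E)%E.
  by rewrite lee_fin mulr_ge0 ?poisson_term_ge0.
rewrite nneseries_recl // mul0r add0e -nneseries_addn //.
under eq_eseriesr do rewrite addn1 poisson_term_shift EFinM.
rewrite nneseriesZl; last by move=> n _; rewrite lee_fin poisson_term_ge0.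
by rewrite eseries_poisson_term // -EFinM.
Qed.

Lemma powR_tangent_le q l x : 1 <= q -> 0 <= l -> 0 <= x ->
  q * l `^ (q - 1) * x <= x `^ q + (q - 1) * l `^ q.
Proof.
move=> q1 l0 x0; have [->|qn1] := eqVneq q 1.
  by rewrite subrr powRr0 powRr1 // mul0r addr0 !mul1r.
have q1' : 1 < q by rewrite lt_neqAle eq_sym qn1.
have q0 : 0 < q by lra.
(* Young's inequality with the conjugate exponents q and q / (q - 1). *)
pose p := q / (q - 1).
have p0 : 0 < p by rewrite divr_gt0 ?subr_gt0.
have pV : p^-1 = (q - 1) / q by rewrite invf_div.
have qp : q^-1 + p^-1 = 1 by rewrite pV; field; rewrite gt_eqF.
have := conjugate_powR x0 (powR_ge0 l (q - 1)) q0 p0 qp.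
rewrite -powRrM mulrCA divff ?mulr1 ?subr_eq0 // => young.
rewrite -mulrA (mulrC (l `^ _)) -ler_pdivlMl //.
suff <- : x `^ q / q + l `^ q / p = q^-1 * (x `^ q + (q - 1) * l `^ q) by [].
by rewrite pV; field; rewrite gt_eqF.
Qed.

Lemma poisson_moment_ge q l : 1 <= q -> 0 < l ->
  ((l `^ (q + 1))%:E <= poisson_moment q l)%E.
Proof.
move=> q1 l0; have l0' := ltW l0.
have powRDl (r s : R) : l `^ (r + s) = l `^ r * l `^ s.
  by rewrite powRD // (gt_eqF l0) implybT.
have pt0 n : 0 <= poisson_term l n := poisson_term_ge0 l n l0'.
have qc0 : 0 <= q * l `^ (q - 1) by rewrite mulr_ge0 ?powR_ge0 //; lra.
have qm0 : 0 <= q - 1 by lra.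
have tangent : ((q * l `^ (q - 1))%:E * (l ^+ 2)%:E <=
    poisson_moment q l + ((q - 1) * l `^ q)%:E * l%:E)%E.
  rewrite -(eseries_natr_poisson_term _ l0') -(eseries_poisson_term _ l0').
  rewrite -nneseriesZl; last by move=> n _; rewrite lee_fin mulr_ge0.
  rewrite -nneseriesZl; last by move=> n _; rewrite lee_fin.
  rewrite -nneseriesD => [|n _ _|n _ _]; rewrite ?lee_fin.
  - apply: lee_nneseries => [n _ _|n _].
      rewrite -EFinM lee_fin.
      exact: mulr_ge0 qc0 (mulr_ge0 (ler0n _ _) (pt0 n)).
    rewrite -!EFinM -EFinD lee_fin mulrA -mulrDl ler_wpM2r //.
    by apply: powR_tangent_le; rewrite ?ler0n.
  - exact: mulr_ge0 (powR_ge0 _ _) (pt0 n).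
  - exact: mulr_ge0 (mulr_ge0 qm0 (powR_ge0 _ _)) (pt0 n).
have lq1 : l `^ (q + 1) = l `^ q * l by rewrite powRDl powRr1.
have lq1' : l `^ (q + 1) = l `^ (q - 1) * l ^+ 2.
  by rewrite -powR_mulrn // -powRDl; congr (_ `^ _); lra.
rewrite -!EFinM -mulrA -lq1' -mulrA -lq1 in tangent.
rewrite -(leeD2rE (x := ((q - 1) * l `^ (q + 1))%:E)) // -EFinD.
apply: le_trans tangent.
by rewrite lee_fin; lra.
Qed.

Lemma powR_le_expR x q : 0 <= x -> 0 <= q -> x `^ q <= expR (q * x).
Proof.
move=> x0 q0; rewrite mulrC expRM ge0_ler_powR ?nnegrE ?expR_ge0 //.
by apply: le_trans (expR_ge1Dx x); rewrite lerDr.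
Qed.

Lemma natr_powR_le q l n : 0 < q -> 0 <= l ->
  n%:R `^ q <= (q * (l + 1)) `^ q * expR (l + 1)^-1 ^+ n.
Proof.
move=> q0 l0; have D0 : 0 < q * (l + 1) by rewrite mulr_gt0 ?ltr_wpDl.
have -> : n%:R = q * (l + 1) * (n%:R / (q * (l + 1))).
  by rewrite mulrC divfK ?gt_eqF.
rewrite powRM ?divr_ge0 ?(ltW D0) // ler_wpM2l ?powR_ge0 //.
rewrite -expRM_natl (le_trans (powR_le_expR _ _ _ (ltW q0))) //.
  by rewrite divr_ge0 // ltW.
by rewrite invfM mulrCA mulVKf ?gt_eqF.
Qed.

Lemma mulr_expR_inv_addr1_le l : 0 <= l -> l * expR (l + 1)^-1 <= l + 1.
Proof.
move=> l0; have l1 : 0 < l + 1 by rewrite ltr_wpDl.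
set x := (l + 1)^-1.
have lE : l = (1 - x) * (l + 1) by rewrite /x; field; rewrite gt_eqF.
rewrite {1}lE mulrAC ler_piMl ?(ltW l1) //.
rewrite -ler_pdivlMr ?expR_gt0 // div1r -expRN.
exact: expR_ge1Dx.
Qed.

Lemma poisson_moment_le q l : 0 < q -> 0 <= l ->
  (poisson_moment q l <= (expR 1 * (q * (l + 1)) `^ q * l)%:E)%E.
Proof.
move=> q0 l0; set c := expR (l + 1)^-1.
have c0 : 0 <= c by exact: expR_ge0.
apply: (@le_trans _ _ (((q * (l + 1)) `^ q)%:E *
    \sum_(0 <= n <oo) (poisson_term l n * c ^+ n)%:E)%E).
  rewrite -nneseriesZl => [|n _]; last first.
    by rewrite lee_fin mulr_ge0 ?exprn_ge0 ?poisson_term_ge0.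
  apply: lee_nneseries => [n _ _|n _].
    by rewrite lee_fin mulr_ge0 ?powR_ge0 ?poisson_term_ge0.
  rewrite -EFinM lee_fin (mulrC (_ `^ q)) [leRHS]mulrCA.
  rewrite ler_wpM2l ?poisson_term_ge0 //.
  exact: natr_powR_le.
rewrite eseries_poisson_term_exprn // -EFinM lee_fin (mulrC (expR 1)) -mulrA.
rewrite ler_wpM2l ?powR_ge0 // mulrC ler_wpM2r // ler_expR.
rewrite mulrBr mulr1 lerBlDr addrC.
exact: mulr_expR_inv_addr1_le.
Qed.

Lemma powR_addr1_le q l : 0 <= q -> 0 <= l ->
  (l + 1) `^ q <= 2 `^ q * (l `^ q + 1).
Proof.
move=> q0 l0; have [l1|l1] := leP l 1.
  apply: (@le_trans _ _ (2 `^ q)).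
    by rewrite ge0_ler_powR ?nnegrE //; lra.
  by rewrite ler_peMr ?powR_ge0 // lerDr powR_ge0.
apply: (@le_trans _ _ ((2 * l) `^ q)).
  by rewrite ge0_ler_powR ?nnegrE //; lra.
by rewrite powRM // ler_wpM2l ?powR_ge0 // lerDl.
Qed.

Definition poisson_const q : R := expR 1 * (2 * q) `^ q.

Lemma poisson_const_ge0 q : 0 <= poisson_const q.
Proof. by rewrite mulr_ge0 ?expR_ge0 ?powR_ge0. Qed.

Lemma poisson_moment_le_powR q l : 0 < q -> 0 <= l ->
  (poisson_moment q l <= (poisson_const q * (l `^ (q + 1) + l))%:E)%E.
Proof.
move=> q0 l0; apply: (le_trans (poisson_moment_le _ _ q0 l0)); rewrite lee_fin.
have lq1 : l `^ (q + 1) = l `^ q * l.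
  by rewrite -(mulr_powRB1 l0 (_ : 0 < q + 1)) ?addrK 1?mulrC // ltr_wpDr.
rewrite lq1 (_ : l `^ q * l + l = (l `^ q + 1) * l); last by ring.
rewrite -!mulrA ler_wpM2l ?expR_ge0 // mulrA ler_wpM2r //.
rewrite !powRM ?(ltW q0) ?addr_ge0 // (mulrC (2 `^ q)) -mulrA.
by rewrite ler_wpM2l ?powR_ge0 // powR_addr1_le // ltW.
Qed.

End poisson_moment.

Section eventual_bounds.
Context {R : realType}.

Lemma limn_esup_ltyP (u : (\bar R)^nat) :
  (limn_esup u < +oo)%E <-> exists M : R, \forall n \near \oo, (u n <= M%:E)%E.
Proof.
rewrite limn_esup_lim (cvg_lim _ (@cvg_esups_inf R u)) //; split.
  move=> /ereal_inf_lt[_ [m _ <-]] supu.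
  have ub n : (m <= n)%N -> (u n <= esups u m)%E.
    by move=> mn; apply: ereal_sup_ubound; exists n.
  case: (esups u m) ub supu => [r| |] // ub _.
    by exists r; exists m.
  by exists 0; exists m => // n /ub; rewrite leeNy_eq => /eqP ->; rewrite leNye.
move=> [M [m _ uM]]; apply: (@le_lt_trans _ _ (esups u m)).
  by apply: ereal_inf_lbound; exists m.
apply: (@le_lt_trans _ _ M%:E); last exact: ltry.
by apply: ge_ereal_sup => _ [n /= mn <-]; apply: uM.
Qed.

Lemma limn_esup_lty_le (u v : (\bar R)^nat) (c d : R) : 0 <= c ->
  (\forall n \near \oo, (u n <= c%:E * v n + d%:E)%E) ->
  (limn_esup v < +oo)%E -> (limn_esup u < +oo)%E.
Proof.
move=> c0 uv /limn_esup_ltyP[M vM]; apply/limn_esup_ltyP; exists (c * M + d).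
near=> n; apply: (le_trans (near uv n _)) => //.
by rewrite EFinD EFinM leeD2r // lee_wpmul2l ?lee_fin //; near: n.
Unshelve. all: by end_near. Qed.

Lemma cvg_natr_powRN (a : R) : 0 < a ->
  (fun N : nat => N%:R `^ (- a)) @ \oo --> 0.
Proof.
move=> a0; apply/cvgr0Pnorm_lt => e e0; near=> N.
have N0 : 0 < N%:R :> R by rewrite ltr0n; near: N; exact: nbhs_infty_gt.
rewrite ger0_norm ?powR_ge0 // powRN -invf_plt ?posrE ?powR_gt0 //.
have : e^-1 `^ a^-1 < N%:R by near: N; exact: nbhs_infty_gtr.
move/(gt0_ltr_powR a0).
rewrite -powRrM mulVf ?gt_eqF // powRr1 ?invr_ge0 ?ltW //.
by apply; rewrite nnegrE ?powR_ge0 ?ltW.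
Unshelve. all: by end_near. Qed.

Lemma bigO_rate_cvg (x : nat -> R) (l a : R) : 0 < a ->
  bigO_rate x l a -> x @ \oo --> l.
Proof.
move=> a0 [C [N0 xC]]; apply/cvgrPdist_lt => e e0.
have := cvgMl_tmp (a := C) (cvg_natr_powRN _ a0).
rewrite mulr0 => /(_ _)/cvgr0Pnorm_lt/(_ e e0).
apply: filterS2 (nbhs_infty_ge N0) => N /xC + Ce.
by rewrite distrC => /le_lt_trans; apply; apply: le_lt_trans (ler_norm _) Ce.
Qed.

Lemma cvg_gt0_near_bounds (x : nat -> R) (l : R) : 0 < l -> x @ \oo --> l ->
  \forall N \near \oo, l / 2 <= x N <= 2 * l.
Proof.
move=> l0 /cvgrPdist_le/(_ (l / 2) (divr_gt0 l0 (ltr0Sn _ 1))).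
apply: filterS => N; rewrite ler_distlC => /andP[lb ub].
by apply/andP; split; lra.
Qed.

End eventual_bounds.

Section moment_g_bounds.
Context {R : realType} (lam : nat -> nat -> R) (q : R).
Hypothesis lam_gt0 : forall {N} (i : 'I_N), 0 < lam N i.

Lemma muN_gt0 N : (0 < N)%N -> 0 < muN lam N.
Proof.
case: N => // N _; rewrite /muN divr_gt0 // big_ord_recl ltr_pwDl //.
by rewrite sumr_ge0 // => i _; rewrite ltW.
Qed.

Lemma moment_lam_ge0 N : 0 <= moment_lam lam q N.
Proof. by rewrite divr_ge0 // sumr_ge0 // => i _; rewrite powR_ge0. Qed.

Lemma moment_gE N : moment_g lam q N =
  (((N%:R * muN lam N)^-1)%:E * \sum_(i < N) poisson_moment q (lam N i))%E.
Proof.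
have ge0 n (i : 'I_N) : 0 <= n%:R `^ q * poisson_term (lam N i) n.
  exact: mulr_ge0 (powR_ge0 _ _) (poisson_term_ge0 _ _ (ltW (lam_gt0 i))).
transitivity (\sum_(0 <= n <oo) (((N%:R * muN lam N)^-1)%:E *
    \sum_(i < N) (n%:R `^ q * poisson_term (lam N i) n)%:E))%E.
  by apply: eq_eseriesr => n _; rewrite /gN mulrCA mulr_sumr EFinM sumEFin.
rewrite nneseriesZl => [|n _]; last by apply: sume_ge0 => i _; rewrite lee_fin.
by rewrite nneseries_sum // => i j _; rewrite lee_fin.
Qed.

Lemma moment_g_ge N : 1 <= q -> (0 < N)%N ->
  ((moment_lam lam q N / muN lam N)%:E <= moment_g lam q N)%E.
Proof.
move=> q1 N0; have mu0 := muN_gt0 _ N0.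
have -> : moment_lam lam q N / muN lam N =
    (N%:R * muN lam N)^-1 * \sum_(i < N) lam N i `^ (q + 1).
  by rewrite /moment_lam; field; rewrite !gt_eqF ?ltr0n.
rewrite moment_gE EFinM; apply: lee_wpmul2l.
  by rewrite lee_fin invr_ge0 mulr_ge0 // ltW.
by rewrite -sumEFin lee_sum // => i _; rewrite poisson_moment_ge.
Qed.

Lemma moment_g_le N : 0 < q -> (0 < N)%N -> (moment_g lam q N <=
  (poisson_const q * (moment_lam lam q N / muN lam N + 1))%:E)%E.
Proof.
move=> q0 N0; have mu0 := muN_gt0 _ N0.
have sum_lam : \sum_(i < N) lam N i = N%:R * muN lam N.
  by rewrite /muN mulrC divfK // pnatr_eq0 -lt0n.
have -> : poisson_const q * (moment_lam lam q N / muN lam N + 1) =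
    (N%:R * muN lam N)^-1 *
    \sum_(i < N) poisson_const q * (lam N i `^ (q + 1) + lam N i).
  rewrite -mulr_sumr big_split /= sum_lam /moment_lam.
  by field; rewrite !gt_eqF ?ltr0n.
rewrite moment_gE EFinM; apply: lee_wpmul2l.
  by rewrite lee_fin invr_ge0 mulr_ge0 // ltW.
by rewrite -sumEFin lee_sum // => i _; rewrite poisson_moment_le_powR // ltW.
Qed.

Lemma moment_lam_le_moment_g N b : 1 <= q -> (0 < N)%N -> muN lam N <= b ->
  ((moment_lam lam q N)%:E <= b%:E * moment_g lam q N)%E.
Proof.
move=> q1 N0 mu_b; have mu0 := muN_gt0 _ N0.
have -> : moment_lam lam q N = muN lam N * (moment_lam lam q N / muN lam N).
  by rewrite mulrC divfK // gt_eqF.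
rewrite EFinM lee_pmul ?lee_fin ?moment_g_ge ?(ltW mu0) //.
by rewrite divr_ge0 ?moment_lam_ge0 // ltW.
Qed.

Lemma moment_g_le_moment_lam N a : 0 < q -> (0 < N)%N ->
  0 < a -> a <= muN lam N ->
  (moment_g lam q N <=
    (poisson_const q / a)%:E * (moment_lam lam q N)%:E +
    (poisson_const q)%:E)%E.
Proof.
move=> q0 N0 a0 a_mu; have mu0 : 0 < muN lam N := lt_le_trans a0 a_mu.
apply: (le_trans (moment_g_le _ q0 N0)).
rewrite -EFinM -EFinD lee_fin mulrDr mulr1 lerD2r -[leRHS]mulrA.
rewrite ler_wpM2l ?poisson_const_ge0 //.
by rewrite mulrC ler_wpM2r ?moment_lam_ge0 ?lef_pV2 ?posrE.
Qed.

End moment_g_bounds.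

Theorem lemmaA2 (R : realType) (lam : nat -> nat -> R) (q : R)
  (hlam : forall (N : nat) (i : 'I_N), 0 < lam N i)
  (hq : 1 <= q)
  (hmeans : exists (mu nu alpha1 : R), 0 < mu /\ 1 < nu /\ 0 < alpha1 /\
      bigO_rate (muN lam) mu alpha1 /\ bigO_rate (nuN lam) nu alpha1) :
  (limn_esup (moment_g lam q) < +oo)%E <->
  (limn_esup (fun N => (moment_lam lam q N)%:E) < +oo)%E.
Proof.
case: hmeans => mu [_ [alpha [mu0 [_ [alpha0 [rate_mu _]]]]]].
have mu_near := cvg_gt0_near_bounds _ _ mu0
  (bigO_rate_cvg _ _ _ alpha0 rate_mu).
split=> fin.
- apply: (limn_esup_lty_le _ _ (2 * mu) 0 _ _ fin); first lra.
  apply: filterS2 (nbhs_infty_gt 0) mu_near => N N0 /andP[_ mu_ub].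
  by rewrite adde0 moment_lam_le_moment_g.
- have mu20 : 0 < mu / 2 by lra.
  apply: (limn_esup_lty_le _ _ (poisson_const q / (mu / 2)) (poisson_const q)
    _ _ fin).
    by rewrite divr_ge0 ?poisson_const_ge0 ?ltW.
  apply: filterS2 (nbhs_infty_gt 0) mu_near => N N0 /andP[mu_lb _].
  by rewrite moment_g_le_moment_lam //; lra.
Qed.
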